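(* Let $G\rightrightarrows X$ be a locally compact groupoid, $A\to X$ a Banach algebra $G$-bundle, $E\to X$ a Banach $A$-module bundle, $\sigma$ an $A$-valued multiplier for $G$, and $T:s^*E\to t^*E$ an $A$-linear almost $\sigma$-representation. Then $T$ is an invertible morphism of Banach bundles over $G$ (i.e. each $T(g)$ is invertible and $g\mapsto T(g)^{-1}$ defines a morphism $t^*E\to s^*E$ covering $\mathrm{id}_G$), and for all $g\in G$ $$\|T(g)^{-1}\|\le\frac{b(T,tg)}{1-r(T,tg)}.$$
   Context: A locally compact groupoid is a topological groupoid $G\rightrightarrows X$ (source $s$, target $t$, units $1x$, composable pairs $G\times_{s,t}G=\{(g,h):sg=th\}$) whose arrow space is locally compact Hausdorff, equipped with a continuous left Haar system $\{\mu^x\}_{x\in X}$: each $\mu^x$ is a Radon measure on $G$ with support $G^x=t^{-1}(x)$, $\int\varphi(gh)\,d\mu^{sg}(h)=\int\varphi(h)\,d\mu^{tg}(h)$ for $g\in G,\varphi\in C_c(G)$, and $x\mapsto\int\varphi\,d\mu^x$ is continuous. $Gx=t(s^{-1}(x))$ is the orbit of $x$. Banach bundle (Fell): Hausdorff space $E$ with continuous open surjection $p:E\to X$, continuous fiberwise vector operations over $\mathbb R$, continuous norm making fibers Banach spaces, such that nets $e_i$ with $pe_i\to x$, $|e_i|\to0$ converge to $0_x$. Morphisms: continuous fiberwise linear maps; pullbacks $s^*E,t^*E$ over $G$ have fibers $E_{sg}$, $E_{tg}$ at $g$. A Banach algebra bundle $A\to X$ is a Banach bundle with continuous fiberwise multiplications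 and a continuous unit section making fibers unital Banach algebras with $|ab|\le|a||b|$, $|1|=1$; $A^\times$ = invertible elements. A Banach $A$-module bundle is a Banach bundle $E\to X$ with a continuous fiberwise bilinear action $A\times_XE\to E$, $|ae|\le|a||e|$, $1e=e$. A Banach algebra $G$-bundle is a Banach algebra bundle with a continuous left action of $G$ by isometric algebra isomorphisms $A_{sg}\to A_{tg}$, $a\mapsto ga$. An $A$-valued multiplier is a continuous $\sigma$ on $G\times_{s,t}G$ with $\sigma(g,h)\in A^\times_{tg}$ central in $A_{tg}$, $\sigma(g,h)=1$ if $g$ or $h$ is a unit, and $\sigma(g,h)\sigma(gh,k)=g\sigma(h,k)\,\sigma(g,hk)$ for composable $g,h,k$. A pseudorepresentation is any morphism $T:s^*E\to t^*E$ covering $\mathrm{id}_G$, i.e. continuously varying bounded operators $T(g):E_{sg}\to E_{tg}$; it is $A$-linear if $T(g)(ae)=ga\cdot T(g)e$. With $\ell(\sigma,g)=\max\{1,|\sigma(g,g^{-1})^{-1}|\}$, the $\sigma$-defect and $\sigma$-bound along the orbit of $x$ are $r(T,x)=\sup_{y\in Gx}\|\mathrm{id}-T(1y)\|+\sup_{g\in t^{-1}(Gx),\,h\in G^{sg}}\ell(\sigma,g)\|\sigma(g,h)T(gh)-T(g)T(h)\|$, $b(T,x)=\sup_{g\in t^{-1}(Gx)}\ell(\sigma,g)\|T(g)\|$ (possibly infinite). $T$ is an almost $\sigma$-representation if $r(T,x)\le\min\{1/4,\,b(T,x)^{-2}/9\}$ for every $x\in X$. *)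

From mathcomp Require Import all_boot all_order all_algebra.
From mathcomp Require Import all_classical all_reals all_analysis.
Import Order.TTheory GRing.Theory Num.Theory.
Import numFieldNormedType.Exports.

Set Implicit Arguments.
Unset Strict Implicit.
Unset Printing Implicit Defensive.

Local Open Scope classical_set_scope.
Local Open Scope ring_scope.

(* Topological groupoids  G ⇉ X :  source s, target t, units u,            *)
(* multiplication m (meaningful on composable pairs, s g = t h), inverse i. *)

Definition composable (G X : Type) (s t : G -> X) : set (G * G) :=
  [set gh | s gh.1 = t gh.2].

Definition is_topological_groupoid (G X : topologicalType)
  (s t : G -> X) (u : X -> G) (m : G -> G -> G) (i : G -> G) : Prop :=
  [/\ [/\ (forall x, s (u x) = x /\ t (u x) = x) &
          (forall g h, s g = t h -> s (m g h) = s h /\ t (m g h) = t g)],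
      (forall g h k, s g = t h -> s h = t k -> m (m g h) k = m g (m h k)),
      (forall g, m (u (t g)) g = g /\ m g (u (s g)) = g),
      (forall g, [/\ s (i g) = t g, t (i g) = s g,
                     m g (i g) = u (t g) & m (i g) g = u (s g)]) &
      [/\ continuous s, continuous t, continuous u, continuous i &
          {within composable s t, continuous (fun gh => m gh.1 gh.2)}]].

Definition borel (G : ptopologicalType) := g_sigma_algebraType (@open G).

Definition Cc (R : realType) (G : topologicalType) (phi : G -> R) : Prop :=
  continuous phi /\ compact (closure [set g | phi g != 0]).

Definition radon (R : realType) (G : ptopologicalType)
  (mu : {measure set (borel G) -> \bar R}) : Prop :=
  [/\ (forall K : set G, compact K -> (mu K < +oo)%E),
      (forall B : set (borel G), measurable B ->
          mu B = ereal_inf [set mu U | U in [set U : set G | open U /\ B `<=` U]]) &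
      (forall U : set G, open U ->
          mu U = ereal_sup [set mu K | K in [set K : set G | compact K /\ K `<=` U]])].

Definition msupport (R : realType) (G : ptopologicalType)
  (mu : {measure set (borel G) -> \bar R}) : set G :=
  [set g | forall U : set G, open U -> U g -> (0 < mu U)%E].

Definition left_haar_system (R : realType) (G : ptopologicalType) (X : topologicalType)
  (s t : G -> X) (m : G -> G -> G) (mu : X -> {measure set (borel G) -> \bar R}) : Prop :=
  [/\ (forall x, radon (mu x)),
      (forall x, msupport (mu x) = [set g | t g = x]),
      (forall (g : G) (phi : G -> R), Cc phi ->
          (\int[mu (s g)]_(h in [set h : borel G | t h = s g]) (phi (m g h))%:E)%E
          = (\int[mu (t g)]_h (phi h)%:E)%E) &
      (forall phi : G -> R, Cc phi ->
          continuous (fun x : X => fine (\int[mu x]_h (phi h)%:E)%E))].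

Definition locally_compact_groupoid (R : realType) (G : ptopologicalType) (X : topologicalType)
  (s t : G -> X) (u : X -> G) (m : G -> G -> G) (i : G -> G) : Prop :=
  [/\ is_topological_groupoid s t u m i,
      hausdorff_space G, locally_compact [set: G] &
      exists mu : X -> {measure set (borel G) -> \bar R}, left_haar_system s t m mu].

(* Banach bundles (Fell), given by the total space E, projection p, zero    *)
(* section z, fiberwise addition add, scalar multiplication scal, norm nrm. *)

Definition fibered (E X : Type) (p : E -> X) : set (E * E) :=
  [set ee | p ee.1 = p ee.2].

Definition banach_bundle (R : realType) (X E : topologicalType) (p : E -> X)
  (z : X -> E) (add : E -> E -> E) (scal : R -> E -> E) (nrm : E -> R) : Prop :=
  [/\ [/\ hausdorff_space E, continuous p,
          (forall x, exists e, p e = x) &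
          (forall U : set E, open U -> open (p @` U))],
      [/\ (forall x, p (z x) = x),
          (forall e e', p e = p e' -> p (add e e') = p e) &
          (forall c e, p (scal c e) = p e)],
      [/\ {within fibered p, continuous (fun ee => add ee.1 ee.2)},
          continuous (fun ce : R * E => scal ce.1 ce.2) &
          continuous nrm],
      (forall e e' e'', p e = p e' -> p e = p e'' ->
         [/\ add e e' = add e' e, add (add e e') e'' = add e (add e' e''),
             add e (z (p e)) = e, add e (scal (-1) e) = z (p e) &
             [/\ scal 1 e = e,
                 (forall a b, scal a (scal b e) = scal (a * b) e),
                 (forall a b, scal (a + b) e = add (scal a e) (scal b e)) &
                 (forall a, scal a (add e e') = add (scal a e) (scal a e'))]]) &
      [/\ [/\ (forall e, nrm e = 0 -> e = z (p e)),
          (forall c e, nrm (scal c e) = `|c| * nrm e) &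
          (forall e e', p e = p e' -> nrm (add e e') <= nrm e + nrm e')],
      (forall (x : X) (v : nat -> E), (forall n, p (v n) = x) ->
         (forall eps : R, 0 < eps -> exists N : nat, forall n k : nat,
              (N <= n)%N -> (N <= k)%N -> nrm (add (v n) (scal (-1) (v k))) < eps) ->
         exists e, p e = x /\
           ((fun n => nrm (add (v n) (scal (-1) e))) @ \oo --> (0 : R))) &
      (* nets (= proper filters) e_i with p e_i -> x and |e_i| -> 0 converge to 0_x *)
      (forall (F : set_system E) (x : X), ProperFilter F ->
         (p @ F --> x) -> (nrm @ F --> (0 : R)) -> (F --> z x))]].

Definition banach_algebra_bundle (R : realType) (X A : topologicalType) (p : A -> X)
  (z : X -> A) (add : A -> A -> A) (scal : R -> A -> A) (nrm : A -> R)
  (mul : A -> A -> A) (one : X -> A) : Prop :=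
  [/\ banach_bundle p z add scal nrm,
      [/\ (forall a b, p a = p b -> p (mul a b) = p a),
          (forall x, p (one x) = x),
          continuous one &
          {within fibered p, continuous (fun ab => mul ab.1 ab.2)}],
      (forall a b c, p a = p b -> p a = p c ->
         [/\ mul (add a b) c = add (mul a c) (mul b c),
             mul a (add b c) = add (mul a b) (mul a c),
             (forall k, mul (scal k a) b = scal k (mul a b)),
             (forall k, mul a (scal k b) = scal k (mul a b)) &
             mul (mul a b) c = mul a (mul b c)]),
      (forall a, mul (one (p a)) a = a /\ mul a (one (p a)) = a) &
      [/\ (forall a b, p a = p b -> nrm (mul a b) <= nrm a * nrm b) &
          (forall x, nrm (one x) = 1)]].

Definition is_inverse (X A : Type) (p : A -> X) (mul : A -> A -> A) (one : X -> A)
  (a b : A) : Prop :=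
  [/\ p b = p a, mul a b = one (p a) & mul b a = one (p a)].

Definition invertible (X A : Type) (p : A -> X) (mul : A -> A -> A) (one : X -> A)
  (a : A) : Prop := exists b, is_inverse p mul one a b.

(* the inverse a^{-1} (it is unique when it exists) *)
Definition ainv (X : Type) (A : topologicalType) (p : A -> X) (mul : A -> A -> A)
  (one : X -> A) (a : A) : A := xget a [set b | is_inverse p mul one a b].

Definition banach_module_bundle (R : realType) (X A E : topologicalType)
  (pA : A -> X) (addA : A -> A -> A) (scalA : R -> A -> A) (nA : A -> R)
  (mulA : A -> A -> A) (oneA : X -> A)
  (pE : E -> X) (zE : X -> E) (addE : E -> E -> E) (scalE : R -> E -> E) (nE : E -> R)
  (act : A -> E -> E) : Prop :=
  [/\ banach_bundle pE zE addE scalE nE,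
      (forall a e, pA a = pE e -> pE (act a e) = pE e),
      {within [set ae | pA ae.1 = pE ae.2], continuous (fun ae => act ae.1 ae.2)},
      (forall a a' e e', pA a = pE e -> pA a' = pE e -> pE e' = pE e ->
         [/\ act (addA a a') e = addE (act a e) (act a' e),
             act a (addE e e') = addE (act a e) (act a e'),
             (forall k, act (scalA k a) e = scalE k (act a e)),
             (forall k, act a (scalE k e) = scalE k (act a e)) &
             act (mulA a a') e = act a (act a' e)]) &
      [/\ (forall a e, pA a = pE e -> nE (act a e) <= nA a * nE e) &
          (forall e, act (oneA (pE e)) e = e)]].

Definition algebra_G_action (R : realType) (G X A : topologicalType)
  (s t : G -> X) (u : X -> G) (m : G -> G -> G)
  (pA : A -> X) (addA : A -> A -> A) (scalA : R -> A -> A) (nA : A -> R)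
  (mulA : A -> A -> A) (oneA : X -> A) (gact : G -> A -> A) : Prop :=
  [/\ (forall g a, pA a = s g -> pA (gact g a) = t g),
      {within [set ga | s ga.1 = pA ga.2], continuous (fun ga => gact ga.1 ga.2)},
      (forall g a b, pA a = s g -> pA b = s g ->
         [/\ gact g (addA a b) = addA (gact g a) (gact g b),
             (forall k, gact g (scalA k a) = scalA k (gact g a)),
             gact g (mulA a b) = mulA (gact g a) (gact g b),
             gact g (oneA (s g)) = oneA (t g) &
             nA (gact g a) = nA a]),
      (forall g b, pA b = t g -> exists a, pA a = s g /\ gact g a = b) &
      [/\ (forall a, gact (u (pA a)) a = a) &
          (forall g h a, s g = t h -> pA a = s h -> gact (m g h) a = gact g (gact h a))]].

Definition multiplier (G X A : topologicalType)
  (s t : G -> X) (u : X -> G) (m : G -> G -> G)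
  (pA : A -> X) (mulA : A -> A -> A) (oneA : X -> A) (gact : G -> A -> A)
  (sigma : G -> G -> A) : Prop :=
  [/\ {within composable s t, continuous (fun gh => sigma gh.1 gh.2)},
      (forall g h, s g = t h ->
         [/\ pA (sigma g h) = t g, invertible pA mulA oneA (sigma g h) &
             (forall a, pA a = t g -> mulA (sigma g h) a = mulA a (sigma g h))]),
      (forall g h, s g = t h -> ((exists x, g = u x) \/ (exists x, h = u x)) ->
         sigma g h = oneA (t g)) &
      (forall g h k, s g = t h -> s h = t k ->
         mulA (sigma g h) (sigma (m g h) k) = mulA (gact g (sigma h k)) (sigma g (m h k)))].

(* A morphism src^*E -> tgt^*E of Banach bundles over G covering id_G:
   continuously varying bounded linear operators T g : E_{src g} -> E_{tgt g}. *)
Definition pullback_morphism (R : realType) (G X E : topologicalType)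
  (src tgt : G -> X) (pE : E -> X) (addE : E -> E -> E) (scalE : R -> E -> E)
  (nE : E -> R) (T : G -> E -> E) : Prop :=
  [/\ (forall g e, pE e = src g -> pE (T g e) = tgt g),
      (forall g e e', pE e = src g -> pE e' = src g ->
          T g (addE e e') = addE (T g e) (T g e')),
      (forall g k e, pE e = src g -> T g (scalE k e) = scalE k (T g e)),
      (forall g, exists C : R, forall e, pE e = src g -> nE (T g e) <= C * nE e) &
      {within [set ge | src ge.1 = pE ge.2], continuous (fun ge => (ge.1, T ge.1 ge.2))}].

Definition pseudorepresentation (R : realType) (G X E : topologicalType)
  (s t : G -> X) (pE : E -> X) (addE : E -> E -> E) (scalE : R -> E -> E)
  (nE : E -> R) (T : G -> E -> E) : Prop :=
  pullback_morphism s t pE addE scalE nE T.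

Definition A_linear (G X A E : topologicalType) (s : G -> X)
  (pA : A -> X) (pE : E -> X) (act : A -> E -> E) (gact : G -> A -> A)
  (T : G -> E -> E) : Prop :=
  forall g a e, pA a = s g -> pE e = s g -> T g (act a e) = act (gact g a) (T g e).

Definition opnorm (R : realType) (X E : Type) (pE : E -> X) (nE : E -> R)
  (x : X) (L : E -> E) : \bar R :=
  ereal_sup [set (nE (L e))%:E | e in [set e | pE e = x /\ nE e <= 1]].

Definition orbit (G X : Type) (s t : G -> X) (x : X) : set X :=
  [set y | exists k, s k = x /\ t k = y].

Definition ell (R : realType) (G X : Type) (A : topologicalType) (i : G -> G)
  (pA : A -> X) (nA : A -> R) (mulA : A -> A -> A) (oneA : X -> A)
  (sigma : G -> G -> A) (g : G) : R :=
  Num.max 1 (nA (ainv pA mulA oneA (sigma g (i g)))).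

Definition defect (R : realType) (G X A E : topologicalType)
  (s t : G -> X) (u : X -> G) (m : G -> G -> G) (i : G -> G)
  (pA : A -> X) (nA : A -> R) (mulA : A -> A -> A) (oneA : X -> A)
  (pE : E -> X) (addE : E -> E -> E) (scalE : R -> E -> E) (nE : E -> R)
  (act : A -> E -> E) (sigma : G -> G -> A) (T : G -> E -> E) (x : X) : \bar R :=
  (ereal_sup [set opnorm pE nE y (fun e => addE e (scalE (-1)%R (T (u y) e)))
              | y in orbit s t x]
   + ereal_sup [set (ell i pA nA mulA oneA sigma gh.1)%:E *
                    opnorm pE nE (s gh.2)
                      (fun e => addE (act (sigma gh.1 gh.2) (T (m gh.1 gh.2) e))
                                     (scalE (-1)%R (T gh.1 (T gh.2 e))))
              | gh in [set gh : G * G | orbit s t x (t gh.1) /\ t gh.2 = s gh.1]])%E.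

Definition bound (R : realType) (G X A E : topologicalType)
  (s t : G -> X) (i : G -> G)
  (pA : A -> X) (nA : A -> R) (mulA : A -> A -> A) (oneA : X -> A)
  (pE : E -> X) (nE : E -> R) (sigma : G -> G -> A) (T : G -> E -> E) (x : X) : \bar R :=
  ereal_sup [set ((ell i pA nA mulA oneA sigma g)%:E * opnorm pE nE (s g) (T g))%E
             | g in [set g | orbit s t x (t g)]].

(* b^{-2}/9 in \bar R, with the conventions (+oo)^{-2} = 0 and 0^{-2} = +oo *)
Definition inv_sq_div9 (R : realType) (b : \bar R) : \bar R :=
  match b with
  | r%:E => if r == 0 then +oo%E else (r ^- 2 / 9)%:E
  | +oo%E => 0%E
  | -oo%E => +oo%E
  end.

Definition almost_sigma_rep (R : realType) (G X A E : topologicalType)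
  (s t : G -> X) (u : X -> G) (m : G -> G -> G) (i : G -> G)
  (pA : A -> X) (nA : A -> R) (mulA : A -> A -> A) (oneA : X -> A)
  (pE : E -> X) (addE : E -> E -> E) (scalE : R -> E -> E) (nE : E -> R)
  (act : A -> E -> E) (sigma : G -> G -> A) (T : G -> E -> E) : Prop :=
  forall x : X,
    (defect s t u m i pA nA mulA oneA pE addE scalE nE act sigma T x <= (1 / 4 : R)%:E)%E /\
    (defect s t u m i pA nA mulA oneA pE addE scalE nE act sigma T x
       <= inv_sq_div9 (bound s t i pA nA mulA oneA pE nE sigma T x))%E.

From Pilot Require Import Defs.
From mathcomp Require Import all_boot all_order all_algebra.
From mathcomp Require Import all_classical all_reals all_analysis.
From mathcomp Require Import ring lra.
Import Order.TTheory GRing.Theory Num.Theory.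
Import numFieldNormedType.Exports.

Set Implicit Arguments.
Unset Strict Implicit.
Unset Printing Implicit Defensive.

Local Open Scope classical_set_scope.
Local Open Scope ring_scope.

(* Write c_g = sigma(g^-1, g)^-1 and Q_g = c_g T(g^-1) T(g) on E_{s g}.  Splitting
   w - Q_g w = (w - T(1_{s g}) w) + c_g (sigma(g^-1, g) T(g^-1 g) w - T(g^-1) T(g) w)
   and bounding the two pieces by the two summands of the defect gives
   |w - Q_g w| <= r |w| with r = r(T, t g) <= 1/4.  Hence (1 - r) |w| <= |Q_g w|, which
   makes T(g) injective and bounds |T(g)^-1| by l(sigma, g^-1) |T(g^-1)| / (1 - r),
   itself at most b(T, t g) / (1 - r); and Q_g is onto by the contraction principle in
   the complete fibre E_{s g}, so by A-linearity T(g) is onto as well.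
   Continuity of g |-> T(g)^-1 is checked on nets (g_q, z_q) -> (g_0, z_0): lifting
   through the open projections of A and E gives a_q -> c_{g_0} and
   y_q -> T(g_0)^-1 z_0 above g_q, and
   |T(g_q)^-1 z_q - y_q| <= 4 |a_q| |T(g_q^-1) (z_q - T(g_q) y_q)| -> 0,
   so Fell's condition on E concludes. *)

(** * Convergence along filters *)

Lemma cvg_within_continuous (W : Type) (Y Z : topologicalType) (F : set_system W)
  {FF : Filter F} (D : set Y) (h : Y -> Z) (k : W -> Y) (y : Y) :
  {within D, continuous h} -> D y -> k w @[w --> F] --> y ->
  (\forall w \near F, D (k w)) -> h (k w) @[w --> F] --> h y.
Proof.
move=> hc Dy kc Dk S /((subspace_continuousP D h).1 hc y Dy).
rewrite /within => /kc; apply: filterS2 Dk => w Dw; exact.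
Qed.

Lemma cvg_continuous_comp (W : Type) (F : set_system W) (Y Z : topologicalType)
  (h : Y -> Z) (k : W -> Y) (y : Y) :
  {for y, continuous h} -> k w @[w --> F] --> y -> h (k w) @[w --> F] --> h y.
Proof. by move=> hc kc S /hc /kc. Qed.

Lemma cvg_comp_fst (W : Type) (F : set_system W) (FF : Filter F)
  (Y1 Y2 : topologicalType) (f : W -> Y1 * Y2) (y : Y1 * Y2) :
  f w @[w --> F] --> y -> (f w).1 @[w --> F] --> y.1.
Proof. by move=> fc U /(@cvg_fst _ _ (nbhs y.1) (nbhs y.2) _) /fc. Qed.

Lemma cvg_comp_snd (W : Type) (F : set_system W) (FF : Filter F)
  (Y1 Y2 : topologicalType) (f : W -> Y1 * Y2) (y : Y1 * Y2) :
  f w @[w --> F] --> y -> (f w).2 @[w --> F] --> y.2.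
Proof. by move=> fc U /(@cvg_snd _ _ (nbhs y.1) (nbhs y.2) _) /fc. Qed.

(* Filters stand in for nets: [K'] is a subnet of [K] whose points come with
   lifts [q.2] through the open map [p], converging to [b0]. *)
Lemma open_map_lift_filter (Y : Type) (B Z : topologicalType) (p : B -> Z)
  (K : set_system Y) (phi : Y -> Z) (x : Z) (b0 : B) :
  (forall U : set B, open U -> open (p @` U)) -> ProperFilter K ->
  phi y @[y --> K] --> x -> p b0 = x ->
  exists K' : set_system (Y * B), [/\ ProperFilter K',
    (forall S, K S -> K' (fst @^-1` S)),
    snd q @[q --> K'] --> b0 & K' [set q | p q.2 = phi q.1]].
Proof.
move=> popen KP phic pb0; have KF : Filter K := @filter_filter _ K KP.
pose D := fun AV : set Y * set B => K AV.1 /\ nbhs b0 AV.2.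
pose Bs := fun AV : set Y * set B =>
  [set q : Y * B | AV.1 q.1 /\ AV.2 q.2 /\ p q.2 = phi q.1].
have FiF : Filter (filter_from D Bs).
  apply: filter_from_filter; first by exists (setT, setT); split; exact: filterT.
  move=> [A1 V1] [A2 V2] [/= KA1 NV1] [/= KA2 NV2].
  exists (A1 `&` A2, V1 `&` V2); first by split; exact: filterI.
  by move=> q [/= [a1 a2] [[v1 v2] pq]].
exists (filter_from D Bs); split.
- apply: filter_from_proper => -[A V] [/= KA].
  rewrite nbhsE => -[U [oU Ub0] UV].
  have nx : nbhs x (p @` U).
    by apply: open_nbhs_nbhs; split; [exact: popen|exists b0].
  have Kp : K (phi @^-1` (p @` U)) := phic _ nx.
  have /filter_ex [y [Ay [b Ub pb]]] := @filterI _ K KF _ _ KA Kp.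
  by exists (y, b); split => //; split; [exact: UV|].
- move=> S KS; exists (S, setT); first by split => //; exact: filterT.
  by move=> q [].
- move=> V NV; exists (setT, V); first by split => //; exact: filterT.
  by move=> q [_ []].
- exists (setT, setT); first by split => //=; exact: filterT.
  by move=> q [_ []].
Qed.

(* A net converges as soon as each of its subnets has a convergent subnet. *)
Lemma cvg_from_refinements (Y Y' : Type) (Z : topologicalType) (F : set_system Y)
  {FF : Filter F} (pi : Y' -> Y) (f : Y -> Z) (z0 : Z) :
  (forall K : set_system Y, ProperFilter K -> (forall S, F S -> K S) ->
     exists K' : set_system Y', [/\ ProperFilter K',
       (forall S, K S -> K' (pi @^-1` S)) & f (pi y) @[y --> K'] --> z0]) ->
  f y @[y --> F] --> z0.
Proof.
move=> H U Uz0; apply: contrapT => nFU.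
pose K := within (fun y => ~ U (f y)) F.
have KP : ProperFilter K.
  apply: (Build_ProperFilter _ (within_filter _ FF)); rewrite /within => K0.
  by apply: nFU; apply: (@filterS _ _ FF _ _ _ K0) => y /= h; exact: contrapT.
have FK S : F S -> K S by move=> FS; apply: filterS FS => y Sy _.
have [K' [K'P K'K K'c]] := H K KP FK; have K'F : Filter K' := @filter_filter _ K' K'P.
have /K'K h1 : K [set y | ~ U (f y)] by apply: nearW => y.
by have /filter_ex [y [/= a b]] := @filterI _ _ K'F _ _ h1 (K'c U Uz0).
Qed.

Lemma cvgn0_lt (R : realType) (f : nat -> R) (eps : R) :
  f n @[n --> \oo] --> 0 -> 0 < eps -> (forall n, 0 <= f n) ->
  exists N, forall n, (N <= n)%N -> f n < eps.
Proof.
move=> /cvgrPdist_lt/(_ eps) + he f0 => /(_ he) [N _ HN].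
by exists N => n /HN; rewrite sub0r normrN ger0_norm.
Qed.

(** * Banach bundles *)

Section BanachBundle.
Variables (R : realType) (X E : topologicalType) (p : E -> X) (z : X -> E)
  (add : E -> E -> E) (scal : R -> E -> E) (nrm : E -> R).
Hypothesis bb : banach_bundle p z add scal nrm.

Definition bsub e e' := add e (scal (-1) e').

Let fiber_vector_space e e' e'' : p e = p e' -> p e = p e'' ->
  [/\ add e e' = add e' e, add (add e e') e'' = add e (add e' e''),
      add e (z (p e)) = e, add e (scal (-1) e) = z (p e) &
      [/\ scal 1 e = e, (forall a b, scal a (scal b e) = scal (a * b) e),
          (forall a b, scal (a + b) e = add (scal a e) (scal b e)) &
          (forall a, scal a (add e e') = add (scal a e) (scal a e'))]].
Proof. by case: bb => _ _ _ VS _; exact: VS. Qed.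

Lemma proj_open_map (U : set E) : open U -> open (p @` U).
Proof. by case: bb => [[_ _ _ h] _ _ _ _]; exact: h. Qed.
Lemma proj_zero x : p (z x) = x. Proof. by case: bb => _ [h _ _] *; exact: h. Qed.
Lemma proj_add e e' : p e = p e' -> p (add e e') = p e.
Proof. by case: bb => _ [_ h _] *; exact: h. Qed.
Lemma proj_scal c e : p (scal c e) = p e.
Proof. by case: bb => _ [_ _ h] *; exact: h. Qed.
Lemma proj_sub e e' : p e = p e' -> p (bsub e e') = p e.
Proof. by move=> h; rewrite /bsub proj_add // proj_scal. Qed.

Lemma baddC e e' : p e = p e' -> add e e' = add e' e.
Proof. by move=> h; case: (fiber_vector_space h h). Qed.
Lemma baddA e e' e'' : p e = p e' -> p e = p e'' ->
  add (add e e') e'' = add e (add e' e'').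
Proof. by move=> h1 h2; case: (fiber_vector_space h1 h2). Qed.
Lemma baddr0 e : add e (z (p e)) = e.
Proof. by case: (fiber_vector_space (erefl (p e)) (erefl (p e))). Qed.
Lemma bsubrr e : bsub e e = z (p e).
Proof. by case: (fiber_vector_space (erefl (p e)) (erefl (p e))). Qed.
Lemma bscal1 e : scal 1 e = e.
Proof. by case: (fiber_vector_space (erefl (p e)) (erefl (p e))) => _ _ _ _ []. Qed.
Lemma bscalA a b e : scal a (scal b e) = scal (a * b) e.
Proof. by case: (fiber_vector_space (erefl (p e)) (erefl (p e))) => _ _ _ _ []. Qed.
Lemma bscalDl a b e : scal (a + b) e = add (scal a e) (scal b e).
Proof. by case: (fiber_vector_space (erefl (p e)) (erefl (p e))) => _ _ _ _ []. Qed.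
Lemma bscalDr a e e' : p e = p e' -> scal a (add e e') = add (scal a e) (scal a e').
Proof. by move=> h; case: (fiber_vector_space h h) => _ _ _ _ []. Qed.

Lemma badd0r e : add (z (p e)) e = e.
Proof. by rewrite baddC ?baddr0 // proj_zero. Qed.

Lemma bscal0 e : scal 0 e = z (p e).
Proof.
have h : scal 0 e = add (scal 0 e) (scal 0 e) by rewrite -bscalDl addr0.
have pf : p (scal 0 e) = p e by rewrite proj_scal.
by rewrite -pf -(bsubrr (scal 0 e)) {2}h /bsub baddA ?proj_scal // -/(bsub _ _) bsubrr baddr0.
Qed.

Lemma bnormZ c e : nrm (scal c e) = `|c| * nrm e.
Proof. by case: bb => _ _ _ _ [[_ h _] _ _]; exact: h. Qed.
Lemma ler_bnormD e e' : p e = p e' -> nrm (add e e') <= nrm e + nrm e'.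
Proof. by case: bb => _ _ _ _ [[_ _ h] _ _]; exact: h. Qed.
Lemma bnorm_eq0 e : nrm e = 0 -> e = z (p e).
Proof. by case: bb => _ _ _ _ [[h _ _] _ _]; exact: h. Qed.

Lemma bnorm0 x : nrm (z x) = 0.
Proof. by rewrite -{1}(proj_zero x) -bscal0 bnormZ normr0 mul0r. Qed.

Lemma bnorm_ge0 e : 0 <= nrm e.
Proof.
have := ler_bnormD (esym (proj_scal (-1) e)).
by rewrite -/(bsub e e) bsubrr bnorm0 bnormZ normrN normr1 mul1r; lra.
Qed.

Lemma bsubrKC e e' : p e = p e' -> add e' (bsub e e') = e.
Proof.
move=> h; rewrite /bsub -baddA ?proj_scal //.
by rewrite (baddC (esym h)) baddA ?proj_scal // -/(bsub e' e') bsubrr -h baddr0.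
Qed.

Lemma baddrK a b : p a = p b -> bsub (add a b) b = a.
Proof.
by move=> h; rewrite /bsub baddA ?proj_scal // -/(bsub b b) bsubrr -h baddr0.
Qed.

Lemma bscalB k a b : p a = p b -> scal k (bsub a b) = bsub (scal k a) (scal k b).
Proof.
by move=> h; rewrite /bsub bscalDr ?proj_scal // !bscalA mulrN1 mulN1r.
Qed.

Lemma bdistC a b : p a = p b -> nrm (bsub a b) = nrm (bsub b a).
Proof.
move=> h; have -> : bsub b a = scal (-1) (bsub a b).
  rewrite bscalB // /bsub bscalA mulrN1 opprK bscal1.
  by rewrite baddC ?proj_scal.
by rewrite bnormZ normrN normr1 mul1r.
Qed.

Lemma bdist_eq0 a b : p a = p b -> nrm (bsub a b) = 0 -> a = b.
Proof.
move=> h /bnorm_eq0; rewrite proj_sub // => e0.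
by rewrite -{1}(bsubrKC h) e0 h baddr0.
Qed.

Lemma baddACA a b c d : p a = p b -> p a = p c -> p a = p d ->
  add (add a b) (add c d) = add (add a c) (add b d).
Proof.
move=> hb hc hd.
have pcd : p a = p (add c d) by rewrite proj_add -hc.
have pbd : p a = p (add b d) by rewrite proj_add -hb.
have hbc : p b = p c by rewrite -hb.
have hbd : p b = p d by rewrite -hb.
have hcd : p c = p d by rewrite -hc.
rewrite (baddA hb pcd) -(baddA hbc hbd) (baddC hbc) (baddA (esym hbc) hcd).
by rewrite -(baddA hc pbd).
Qed.

Lemma ler_bdistD a b c : p a = p b -> p a = p c ->
  nrm (bsub a c) <= nrm (bsub a b) + nrm (bsub b c).
Proof.
move=> hab hac.
suff -> : bsub a c = add (bsub a b) (bsub b c) by rewrite ler_bnormD // !proj_sub // -hab.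
have pnb : p (scal (-1) b) = p a by rewrite proj_scal.
have pnc : p (scal (-1) c) = p a by rewrite proj_scal.
have pbc : p (add b (scal (-1) c)) = p a by rewrite proj_add -hab // pnc.
rewrite /bsub (baddA (e := a)) ?pnb ?pbc // -(baddA (e := scal (-1) b)) ?pnb //.
rewrite (baddC (e := scal (-1) b)) ?pnb // -/(bsub b b) bsubrr.
by rewrite -hab -pnc badd0r.
Qed.

Lemma bscalN1B c d : p c = p d -> scal (-1) (bsub c d) = add (scal (-1) c) d.
Proof.
by move=> h; rewrite /bsub bscalDr ?proj_scal // bscalA mulrN1 opprK bscal1.
Qed.

Lemma bsubKr e q : p e = p q -> bsub e (bsub e q) = q.
Proof.
move=> h; rewrite {1}/bsub bscalN1B // -baddA ?proj_scal //.
by rewrite -/(bsub e e) bsubrr h badd0r.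
Qed.

Lemma baddrKA w a b : p w = p a -> p w = p b ->
  bsub (add w a) (add w b) = bsub a b.
Proof.
move=> ha hb; have hab : p a = p b by rewrite -ha.
rewrite /bsub (bscalDr _ hb) (baddACA (a := w)) ?proj_scal //.
by rewrite -/(bsub w w) bsubrr -/(bsub a b) ha -(proj_sub hab) badd0r.
Qed.

Lemma bsubBB a b c d : p a = p b -> p a = p c -> p a = p d ->
  bsub (bsub a b) (bsub c d) = bsub (bsub a c) (bsub b d).
Proof.
move=> hb hc hd.
have hcd : p c = p d by rewrite -hc.
have hbd : p b = p d by rewrite -hb.
rewrite {1}/bsub bscalN1B // [in RHS]/bsub bscalN1B // /bsub baddACA //;
  by rewrite ?proj_add ?proj_scal.
Qed.

Lemma blinearB (L : E -> E) x a b :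
  (forall a b, p a = x -> p b = x -> L (add a b) = add (L a) (L b)) ->
  (forall k a, p a = x -> L (scal k a) = scal k (L a)) ->
  p a = x -> p b = x -> L (bsub a b) = bsub (L a) (L b).
Proof.
by move=> Ladd Lscal pa pb; rewrite /bsub Ladd ?proj_scal // Lscal.
Qed.

Lemma bundle_complete (x : X) (v : nat -> E) : (forall n, p (v n) = x) ->
  (forall eps : R, 0 < eps -> exists N : nat, forall n k : nat,
     (N <= n)%N -> (N <= k)%N -> nrm (bsub (v n) (v k)) < eps) ->
  exists e, p e = x /\ ((fun n => nrm (bsub (v n) e)) @ \oo --> (0 : R)).
Proof. by case: bb => _ _ _ _ [_ h _]; exact: h. Qed.

Section Contraction.
Variables (x : X) (Phi : E -> E) (q : R).
Hypothesis Phi_fiber : forall w, p w = x -> p (Phi w) = x.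
Hypothesis Phi_contr : forall w w', p w = x -> p w' = x ->
  nrm (bsub (Phi w) (Phi w')) <= q * nrm (bsub w w').

Lemma proj_iter w0 j : p w0 = x -> p (iter j Phi w0) = x.
Proof. by move=> pw0; elim: j => //= j IH; rewrite Phi_fiber. Qed.

Lemma iter_contraction_dist (w0 : E) n k : 0 <= q <= 1 -> p w0 = x ->
  (1 - q) * nrm (bsub (iter (n + k) Phi w0) (iter n Phi w0))
    <= q ^+ n * (1 - q ^+ k) * nrm (bsub (Phi w0) w0).
Proof.
move=> /andP[q0 q1] pw0; set d0 := nrm (bsub (Phi w0) w0).
have pv j : p (iter j Phi w0) = x by exact: proj_iter.
have dstep j : nrm (bsub (iter j.+1 Phi w0) (iter j Phi w0)) <= q ^+ j * d0.
  elim: j => [|j IH]; first by rewrite expr0 mul1r.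
  apply: le_trans (Phi_contr (pv j.+1) (pv j)) _.
  by rewrite exprS -mulrA ler_wpM2l.
elim: k => [|k IH]; first by rewrite addn0 bsubrr bnorm0 expr0 subrr !mulr0 mul0r.
have h1 : p (iter (n + k).+1 Phi w0) = p (iter (n + k) Phi w0) by rewrite !pv.
have h2 : p (iter (n + k).+1 Phi w0) = p (iter n Phi w0) by rewrite !pv.
have q1' : 0 <= 1 - q by lra.
rewrite addnS; apply: le_trans (ler_wpM2l q1' (ler_bdistD h1 h2)) _.
have := dstep (n + k)%N; rewrite exprD exprS => hs.
have := bnorm_ge0 (bsub (iter (n + k).+1 Phi w0) (iter (n + k) Phi w0)).
nra.
Qed.

Lemma iter_contraction_cauchy (w0 : E) : 0 <= q < 1 -> p w0 = x ->
  forall eps : R, 0 < eps -> exists N : nat, forall n k : nat,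
    (N <= n)%N -> (N <= k)%N -> nrm (bsub (iter n Phi w0) (iter k Phi w0)) < eps.
Proof.
move=> /andP[q0 q1] pw0 eps he; set d0 := nrm (bsub (Phi w0) w0).
have d00 : 0 <= d0 by exact: bnorm_ge0.
have q1' : 0 < 1 - q by lra.
have dist n k : (n <= k)%N ->
    (1 - q) * nrm (bsub (iter k Phi w0) (iter n Phi w0)) <= q ^+ n * d0.
  move=> /subnKC <-; apply: le_trans (iter_contraction_dist _ _ _ pw0) _.
    by rewrite q0 ltW.
  by rewrite ler_wpM2r // ler_piMr ?exprn_ge0 // lerBlDr lerDl exprn_ge0.
pose c := eps * (1 - q) / (d0 + 1).
have c0 : 0 < c by apply: divr_gt0; [apply: mulr_gt0|]; lra.
have hc : c * (d0 + 1) = eps * (1 - q) by rewrite divfK //; apply: lt0r_neq0; lra.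
have [|N HN] := cvgn0_lt (cvg_expr _) c0 (fun n => exprn_ge0 n q0).
  by rewrite ger0_norm.
have key n k : (N <= k)%N -> (k <= n)%N -> nrm (bsub (iter n Phi w0) (iter k Phi w0)) < eps.
  move=> Nk kn; rewrite -(ltr_pM2l q1'); apply: le_lt_trans (dist _ _ kn) _.
  apply: le_lt_trans (_ : q ^+ k * d0 <= c * d0) _; first by rewrite ler_wpM2r // ltW // HN.
  by rewrite [X in _ < X]mulrC -hc ltr_pM2l //; lra.
exists N => n k Nn Nk; case: (leqP k n) => kn; first exact: key.
by rewrite bdistC ?proj_iter //; apply: key => //; apply: ltnW.
Qed.

Lemma bundle_fixed_point : 0 <= q < 1 -> exists w, p w = x /\ Phi w = w.
Proof.
move=> hq; have q1 : q <= 1 by case/andP: hq => _ /ltW.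
pose v n := iter n Phi (z x).
have pv n : p (v n) = x by exact: proj_iter (proj_zero x).
have [e [pe ce]] := bundle_complete pv (iter_contraction_cauchy hq (proj_zero x)).
exists e; split => //; apply: bdist_eq0; first by rewrite Phi_fiber.
apply: contrapT => /eqP hne; set delta := nrm (bsub (Phi e) e).
have dpos : 0 < delta by rewrite lt0r hne bnorm_ge0.
have [|N HN] := cvgn0_lt ce (_ : 0 < delta / 3) (fun n => bnorm_ge0 _); first lra.
have h1 : p (Phi e) = p (v N.+1) by rewrite !pv Phi_fiber.
have h2 : p (Phi e) = p e by rewrite Phi_fiber.
have hN : nrm (bsub (v N) e) < delta / 3 := HN N (leqnn N).
have hN1 : nrm (bsub (v N.+1) e) < delta / 3 := HN N.+1 (leqnSn N).
have hcontr : nrm (bsub (Phi e) (v N.+1)) <= nrm (bsub (v N) e).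
  apply: le_trans (Phi_contr pe (pv N)) _.
  by rewrite bdistC ?pe ?pv // ler_piMl ?bnorm_ge0.
by have := ler_bdistD h1 h2; rewrite -/delta; lra.
Qed.

End Contraction.

Lemma opnorm_ub (x : X) (L : E -> E) e : p e = x -> nrm e <= 1 ->
  ((nrm (L e))%:E <= opnorm p nrm x L)%E.
Proof. by move=> pe ne; apply: ereal_sup_ubound; exists e. Qed.

Lemma opnorm_ge0 x L : (0 <= opnorm p nrm x L)%E.
Proof.
apply: le_trans (opnorm_ub L (proj_zero x) _); first by rewrite lee_fin bnorm_ge0.
by rewrite bnorm0.
Qed.

Lemma opnorm_le_scale x (L : E -> E) a c : 0 <= a ->
  (a%:E * opnorm p nrm x L <= c%:E)%E ->
  (forall k e, p e = x -> L (scal k e) = scal k (L e)) ->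
  forall e, p e = x -> a * nrm (L e) <= c * nrm e.
Proof.
move=> a0 hc Lhom e pe.
have [n0|npos] := eqVneq (nrm e) 0.
  have ez : e = scal 0 e by rewrite bscal0 -{1}(bnorm_eq0 n0).
  by rewrite {1}ez Lhom // bnormZ normr0 mul0r mulr0 n0 mulr0.
have ngt : 0 < nrm e by rewrite lt0r npos bnorm_ge0.
set e' := scal (nrm e)^-1 e.
have ne' : nrm e' = 1 by rewrite bnormZ ger0_norm ?invr_ge0 ?bnorm_ge0 // mulVf.
have h : ((a * nrm (L e'))%:E <= c%:E)%E.
  apply: le_trans hc; rewrite EFinM lee_wpmul2l ?lee_fin //.
  by apply: opnorm_ub; rewrite ?proj_scal ?ne'.
rewrite lee_fin /e' Lhom // bnormZ ger0_norm ?invr_ge0 ?bnorm_ge0 // in h.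
have -> : a * nrm (L e) = a * ((nrm e)^-1 * nrm (L e)) * nrm e by field; exact: lt0r_neq0.
by rewrite ler_pM2r.
Qed.

Section Convergence.
Variables (W : Type) (F : set_system W) (FF : ProperFilter F).
Let filterF : Filter F := @filter_filter _ F FF.

Lemma bcvgD (f g : W -> E) a b : f w @[w --> F] --> a -> g w @[w --> F] --> b ->
  p a = p b -> (\forall w \near F, p (f w) = p (g w)) ->
  add (f w) (g w) @[w --> F] --> add a b.
Proof.
move=> fc gc pab hpe.
have hc : {within fibered p, continuous (fun ee : E * E => add ee.1 ee.2)}.
  by case: bb => _ _ [].
exact: (cvg_within_continuous (k := fun w => (f w, g w)) (y := (a, b)) hc _ (cvg_pair fc gc)).
Qed.

Lemma bcvgZ (f : W -> E) c a : f w @[w --> F] --> a ->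
  scal c (f w) @[w --> F] --> scal c a.
Proof.
move=> fc; have hc : continuous (fun ce : R * E => scal ce.1 ce.2) by case: bb => _ _ [].
exact: (cvg_continuous_comp (hc (c, a)) (cvg_pair (cvg_cst c) fc)).
Qed.

Lemma bcvgB (f g : W -> E) a b : f w @[w --> F] --> a -> g w @[w --> F] --> b ->
  p a = p b -> (\forall w \near F, p (f w) = p (g w)) ->
  bsub (f w) (g w) @[w --> F] --> bsub a b.
Proof.
move=> fc gc pab hpe; apply: bcvgD => //; first exact: bcvgZ.
  by rewrite proj_scal.
by apply: filterS hpe => w ->; rewrite proj_scal.
Qed.

Lemma bcvg_norm (f : W -> E) a : f w @[w --> F] --> a -> nrm (f w) @[w --> F] --> nrm a.
Proof.
move=> fc; have hc : continuous nrm by case: bb => _ _ [].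
exact: (cvg_continuous_comp (hc a) fc).
Qed.

Lemma bcvg_fell (f : W -> E) x : p (f w) @[w --> F] --> x ->
  nrm (f w) @[w --> F] --> 0 -> f w @[w --> F] --> z x.
Proof.
move=> pc nc; case: bb => _ _ _ _ [_ _ fell].
by apply: (fell (f @ F)) => //; exact: fmap_proper_filter.
Qed.

End Convergence.
End BanachBundle.

(** * Topological groupoids and Banach algebra bundles *)

Section TopologicalGroupoid.
Variables (G : ptopologicalType) (X : topologicalType) (s t : G -> X) (u : X -> G)
  (m : G -> G -> G) (i : G -> G).
Hypothesis grp : is_topological_groupoid s t u m i.

Lemma s_unit x : s (u x) = x.
Proof. by case: grp => [[h _] _ _ _ _]; case: (h x). Qed.
Lemma t_unit x : t (u x) = x.
Proof. by case: grp => [[h _] _ _ _ _]; case: (h x). Qed.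
Lemma s_mul g h : s g = t h -> s (m g h) = s h.
Proof. by case: grp => [[_ h'] _ _ _ _] e; case: (h' _ _ e). Qed.
Lemma t_mul g h : s g = t h -> t (m g h) = t g.
Proof. by case: grp => [[_ h'] _ _ _ _] e; case: (h' _ _ e). Qed.
Lemma gmulA g h k : s g = t h -> s h = t k -> m (m g h) k = m g (m h k).
Proof. by case: grp => _ h' _ _ _; exact: h'. Qed.
Lemma gmul1g g : m (u (t g)) g = g.
Proof. by case: grp => _ _ h' _ _; case: (h' g). Qed.
Lemma gmulg1 g : m g (u (s g)) = g.
Proof. by case: grp => _ _ h' _ _; case: (h' g). Qed.
Lemma s_ginv g : s (i g) = t g.
Proof. by case: grp => _ _ _ h' _; case: (h' g). Qed.
Lemma t_ginv g : t (i g) = s g.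
Proof. by case: grp => _ _ _ h' _; case: (h' g). Qed.
Lemma gmulgV g : m g (i g) = u (t g).
Proof. by case: grp => _ _ _ h' _; case: (h' g). Qed.
Lemma gmulVg g : m (i g) g = u (s g).
Proof. by case: grp => _ _ _ h' _; case: (h' g). Qed.
Lemma s_continuous g : {for g, continuous s}.
Proof. by case: grp => _ _ _ _ [+ _ _ _ _] => /(_ g). Qed.
Lemma ginv_continuous g : {for g, continuous i}.
Proof. by case: grp => _ _ _ _ [_ _ _ + _] => /(_ g). Qed.

Lemma ginvK g : i (i g) = g.
Proof.
have e1 : g = m g (m (i g) (i (i g))) by rewrite gmulgV t_ginv gmulg1.
have h1 : s g = t (i g) by rewrite t_ginv.
have h2 : s (i g) = t (i (i g)) by rewrite t_ginv.
have e2 : t g = t (i (i g)) by rewrite t_ginv s_ginv.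
by rewrite {2}e1 -(gmulA h1 h2) gmulgV [in u (t g)]e2 gmul1g.
Qed.

Lemma gorbit_refl x : Defs.orbit s t x x.
Proof. by exists (u x); rewrite s_unit t_unit. Qed.

Lemma gorbit_s g : Defs.orbit s t (t g) (s g).
Proof. by exists (i g); rewrite s_ginv t_ginv. Qed.

End TopologicalGroupoid.

Section BanachAlgebraBundle.
Variables (R : realType) (X A : topologicalType) (pA : A -> X) (zA : X -> A)
  (addA : A -> A -> A) (scalA : R -> A -> A) (nA : A -> R) (mulA : A -> A -> A)
  (oneA : X -> A).
Hypothesis HA : banach_algebra_bundle pA zA addA scalA nA mulA oneA.

Lemma algebra_bundle : banach_bundle pA zA addA scalA nA.
Proof. by case: HA. Qed.
Lemma proj_mul a b : pA a = pA b -> pA (mulA a b) = pA a.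
Proof. by case: HA => _ [h _ _ _] *; exact: h. Qed.
Lemma proj_one x : pA (oneA x) = x.
Proof. by case: HA => _ [_ h _ _]. Qed.
Lemma one_continuous x : {for x, continuous oneA}.
Proof. by case: HA => _ [_ _ + _] => /(_ x). Qed.

Lemma inverse_norm_le b c a : is_inverse pA mulA oneA b c -> pA a = pA b ->
  (1 - nA (bsub addA scalA (oneA (pA b)) (mulA b a))) * nA c <= nA a.
Proof.
case: HA => bbA _ ring_laws unit_laws [norm_mul _] [pc bc cb] pa.
set ba := mulA b a; set Y := bsub addA scalA (oneA (pA b)) ba.
have pba : pA ba = pA b by rewrite /ba proj_mul.
have pY : pA Y = pA b by rewrite /Y (proj_sub bbA) ?proj_one.
have split1 : addA ba Y = oneA (pA b) by rewrite /Y (bsubrKC bbA) // proj_one.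
have cba : mulA c ba = a.
  have [_ _ _ _ <-] := ring_laws c b a pc (etrans pc (esym pa)).
  by rewrite cb -pa; case: (unit_laws a).
have : nA c <= nA a + nA c * nA Y.
  have [_ cD _ _ _] := ring_laws c ba Y (etrans pc (esym pba)) (etrans pc (esym pY)).
  have c1 : mulA c (oneA (pA b)) = c by rewrite -pc; case: (unit_laws c).
  have pacY : pA a = pA (mulA c Y) by rewrite proj_mul ?pc ?pY.
  rewrite -{1}c1 -split1 cD cba; apply: le_trans (ler_bnormD bbA pacY) _.
  by rewrite lerD2l; apply: norm_mul; rewrite pc pY.
lra.
Qed.

End BanachAlgebraBundle.

(** * Inverting an almost sigma-representation *)

Section AlmostRepresentation.
Variables (R : realType) (G : ptopologicalType) (X A E : topologicalType)
  (s t : G -> X) (u : X -> G) (m : G -> G -> G) (i : G -> G)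
  (pA : A -> X) (zA : X -> A) (addA : A -> A -> A) (scalA : R -> A -> A) (nA : A -> R)
  (mulA : A -> A -> A) (oneA : X -> A) (gact : G -> A -> A)
  (pE : E -> X) (zE : X -> E) (addE : E -> E -> E) (scalE : R -> E -> E) (nE : E -> R)
  (act : A -> E -> E) (sigma : G -> G -> A) (T : G -> E -> E).
Hypothesis Hlc : locally_compact_groupoid R s t u m i.
Hypothesis HA : banach_algebra_bundle pA zA addA scalA nA mulA oneA.
Hypothesis Hg : algebra_G_action s t u m pA addA scalA nA mulA oneA gact.
Hypothesis HE : banach_module_bundle pA addA scalA nA mulA oneA pE zE addE scalE nE act.
Hypothesis Hs : multiplier s t u m pA mulA oneA gact sigma.
Hypothesis HT : pseudorepresentation s t pE addE scalE nE T.
Hypothesis Hl : A_linear s pA pE act gact T.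
Hypothesis Hr : almost_sigma_rep s t u m i pA nA mulA oneA pE addE scalE nE act sigma T.

Local Notation subE := (bsub addE scalE).
Local Notation subA := (bsub addA scalA).
Local Notation ell := (ell i pA nA mulA oneA sigma).

Let grp : is_topological_groupoid s t u m i. Proof. by case: Hlc. Qed.
Let bbE : banach_bundle pE zE addE scalE nE. Proof. by case: HE. Qed.
Let bbA : banach_bundle pA zA addA scalA nA. Proof. exact: algebra_bundle HA. Qed.
Let nE_ge0 e : 0 <= nE e. Proof. exact: (bnorm_ge0 bbE e). Qed.
Let nA_ge0 a : 0 <= nA a. Proof. exact: (bnorm_ge0 bbA a). Qed.

Lemma proj_act a e : pA a = pE e -> pE (act a e) = pE e.
Proof. by case: HE => _ h *; exact: h. Qed.
Lemma act_scal a k e : pA a = pE e -> act a (scalE k e) = scalE k (act a e).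
Proof.
move=> h; have h' : pE (scalE k e) = pE e by rewrite (proj_scal bbE).
by case: HE => _ _ _ lin _; case: (lin a a e _ h h h').
Qed.
Lemma act_sub a e e' : pA a = pE e -> pE e' = pE e ->
  act a (subE e e') = subE (act a e) (act a e').
Proof.
move=> h1 h2; have h3 : pE (scalE (-1) e') = pE e by rewrite (proj_scal bbE).
case: HE => _ _ _ lin _; case: (lin a a e _ h1 h1 h3) => _ -> _ _ _.
by rewrite act_scal // h2.
Qed.
Lemma act_mul a a' e : pA a = pE e -> pA a' = pE e ->
  act (mulA a a') e = act a (act a' e).
Proof. by move=> h1 h2; case: HE => _ _ _ lin _; case: (lin a a' e e h1 h2 erefl). Qed.
Lemma act_norm a e : pA a = pE e -> nE (act a e) <= nA a * nE e.
Proof. by case: HE => _ _ _ _ [h _]; exact: h. Qed.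
Lemma act1 e : act (oneA (pE e)) e = e.
Proof. by case: HE => _ _ _ _ [_ h]; exact: h. Qed.

Lemma proj_gact g a : pA a = s g -> pA (gact g a) = t g.
Proof. by case: Hg => h *; exact: h. Qed.
Lemma gact_unit a : gact (u (pA a)) a = a.
Proof. by case: Hg => _ _ _ _ [h _]; exact: h. Qed.
Lemma gact_mul g h a : s g = t h -> pA a = s h -> gact (m g h) a = gact g (gact h a).
Proof. by case: Hg => _ _ _ _ [_ h']; exact: h'. Qed.

Lemma sigma_continuous : {within composable s t, continuous (fun gh => sigma gh.1 gh.2)}.
Proof. by case: Hs. Qed.
Lemma proj_sigma g h : s g = t h -> pA (sigma g h) = t g.
Proof. by case: Hs => _ H _ _ e; case: (H _ _ e). Qed.
Lemma sigma_invertible g h : s g = t h -> invertible pA mulA oneA (sigma g h).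
Proof. by case: Hs => _ H _ _ e; case: (H _ _ e). Qed.

Lemma proj_T g e : pE e = s g -> pE (T g e) = t g.
Proof. by case: HT => h *; exact: h. Qed.
Lemma T_add g e e' : pE e = s g -> pE e' = s g -> T g (addE e e') = addE (T g e) (T g e').
Proof. by case: HT => _ h *; exact: h. Qed.
Lemma T_scal g k e : pE e = s g -> T g (scalE k e) = scalE k (T g e).
Proof. by case: HT => _ _ h *; exact: h. Qed.
Lemma T_bounded g : exists C : R, forall e, pE e = s g -> nE (T g e) <= C * nE e.
Proof. by case: HT => _ _ _ h _; exact: h. Qed.
Lemma T_continuous :
  {within [set ge | s ge.1 = pE ge.2], continuous (fun ge => (ge.1, T ge.1 ge.2))}.
Proof. by case: HT. Qed.
Lemma T_sub g e e' : pE e = s g -> pE e' = s g -> T g (subE e e') = subE (T g e) (T g e').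
Proof.
by move=> h1 h2; apply: (blinearB bbE (x := s g)) => // *; [exact: T_add|exact: T_scal].
Qed.
Lemma T_zero g : T g (zE (s g)) = zE (t g).
Proof.
have ps : pE (zE (s g)) = s g by rewrite (proj_zero bbE).
by rewrite -{1}(proj_zero bbE (s g)) -(bscal0 bbE) T_scal // (bscal0 bbE) proj_T.
Qed.

(* The two suprema whose sum is the defect r(T,x); [rdef x] is r(T,x) itself,
   which is finite for an almost sigma-representation. *)
Definition unit_defect x :=
  ereal_sup [set opnorm pE nE y (fun e => subE e (T (u y) e)) | y in Defs.orbit s t x].
Definition mul_defect x :=
  ereal_sup [set ((ell gh.1)%:E * opnorm pE nE (s gh.2)
      (fun e => subE (act (sigma gh.1 gh.2) (T (m gh.1 gh.2) e)) (T gh.1 (T gh.2 e))))%E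
    | gh in [set gh : G * G | Defs.orbit s t x (t gh.1) /\ t gh.2 = s gh.1]].

Definition runit x := fine (unit_defect x).
Definition rmul x := fine (mul_defect x).
Definition rdef x := runit x + rmul x.

Lemma ell_ge1 g : 1 <= ell g.
Proof. by rewrite /Defs.ell le_max lexx. Qed.

Lemma unit_defect_ge0 x : (0 <= unit_defect x)%E.
Proof.
apply: le_ereal_sup_tmp; exists (opnorm pE nE x (fun e => subE e (T (u x) e))).
  by exists x => //; exact: gorbit_refl grp x.
by have := opnorm_ge0 bbE x (fun e => subE e (T (u x) e)).
Qed.

Lemma mul_defect_ge0 x : (0 <= mul_defect x)%E.
Proof.
apply: le_ereal_sup_tmp; eexists.
  exists (u x, u x) => //=; split; first by rewrite (t_unit grp); exact: gorbit_refl grp x.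
  by rewrite (t_unit grp) (s_unit grp).
by rewrite mule_ge0 ?(opnorm_ge0 bbE) // lee_fin (le_trans _ (ell_ge1 _)).
Qed.

Lemma defectE x : defect s t u m i pA nA mulA oneA pE addE scalE nE act sigma T x =
  (unit_defect x + mul_defect x)%E.
Proof. by []. Qed.

Lemma defect_bounds x : [/\ unit_defect x = (runit x)%:E, mul_defect x = (rmul x)%:E,
  0 <= runit x, 0 <= rmul x & rdef x <= 4^-1].
Proof.
have [+ _] := Hr x; rewrite defectE => hd.
have u0 := unit_defect_ge0 x; have m0 := mul_defect_ge0 x.
have fin (r : \bar R) a : (0 <= r)%E -> (r <= a%:E)%E -> r = (fine r)%:E by case: r.
have eu : unit_defect x = (runit x)%:E.
  by apply: (fin _ (1/4)) => //; apply: le_trans hd; exact: leeDl.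
have em : mul_defect x = (rmul x)%:E.
  by apply: (fin _ (1/4)) => //; apply: le_trans hd; exact: leeDr.
split => //; [by rewrite -lee_fin -eu | by rewrite -lee_fin -em |].
by rewrite /rdef -lee_fin EFinD -eu -em mul1r in hd *.
Qed.

Lemma rdef_bounds x : 0 <= rdef x /\ rdef x <= 4^-1.
Proof. by case: (defect_bounds x) => _ _ h1 h2 h3; split => //; rewrite /rdef addr_ge0. Qed.

Lemma fine_defect x :
  fine (defect s t u m i pA nA mulA oneA pE addE scalE nE act sigma T x) = rdef x.
Proof. by case: (defect_bounds x) => e1 e2 _ _ _; rewrite defectE e1 e2. Qed.

Lemma unit_defect_le x y e : Defs.orbit s t x y -> pE e = y ->
  nE (subE e (T (u y) e)) <= runit x * nE e.
Proof.
move=> oxy pe.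
have h : (1%:E * opnorm pE nE y (fun e => subE e (T (u y) e)) <= (runit x)%:E)%E.
  case: (defect_bounds x) => e1 _ _ _ _; rewrite mul1e -e1.
  by apply: ereal_sup_ubound; exists y.
have := opnorm_le_scale bbE ler01 h _ pe; rewrite mul1r; apply => k e0 pe0.
have ps : pE e0 = s (u y) by rewrite (s_unit grp).
by rewrite T_scal // (bscalB bbE) // (proj_T ps) (t_unit grp).
Qed.

Lemma mul_defect_le x h1 h2 e : Defs.orbit s t x (t h1) -> t h2 = s h1 -> pE e = s h2 ->
  ell h1 * nE (subE (act (sigma h1 h2) (T (m h1 h2) e)) (T h1 (T h2 e))) <= rmul x * nE e.
Proof.
move=> ox th2 pe.
have h : ((ell h1)%:E * opnorm pE nE (s h2)
    (fun e => subE (act (sigma h1 h2) (T (m h1 h2) e)) (T h1 (T h2 e))) <= (rmul x)%:E)%E.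
  case: (defect_bounds x) => _ e2 _ _ _; rewrite -e2.
  by apply: ereal_sup_ubound; exists (h1, h2).
apply: (opnorm_le_scale bbE _ h) => //; first exact: le_trans (ell_ge1 _).
move=> k e0 pe0.
have pm : pE e0 = s (m h1 h2) by rewrite (s_mul grp).
have ph2 : pE (T h2 e0) = s h1 by rewrite proj_T.
have pTm : pA (sigma h1 h2) = pE (T (m h1 h2) e0) by rewrite proj_sigma // proj_T // (t_mul grp).
rewrite (T_scal _ pm) (T_scal _ pe0) (T_scal _ ph2) act_scal // (bscalB bbE) //.
by rewrite proj_act // !proj_T // (t_mul grp).
Qed.

Definition csig g := ainv pA mulA oneA (sigma (i g) g).

Lemma proj_sigmaVg g : pA (sigma (i g) g) = s g.
Proof. by rewrite proj_sigma ?(s_ginv grp) // (t_ginv grp). Qed.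

Lemma csig_inverse g : is_inverse pA mulA oneA (sigma (i g) g) (csig g).
Proof. by apply: xgetPex; apply: sigma_invertible; rewrite (s_ginv grp). Qed.

Lemma proj_csig g : pA (csig g) = s g.
Proof. by case: (csig_inverse g) => -> _ _; exact: proj_sigmaVg. Qed.

Lemma csig_mul g : mulA (csig g) (sigma (i g) g) = oneA (s g).
Proof. by case: (csig_inverse g) => _ _ ->; rewrite proj_sigmaVg. Qed.

Lemma norm_csig_le g : nA (csig g) <= ell (i g).
Proof. by rewrite /Defs.ell (ginvK grp) le_max lexx orbT. Qed.

Definition Q g w := act (csig g) (T (i g) (T g w)).

Lemma proj_TT g w : pE w = s g -> pE (T (i g) (T g w)) = s g.
Proof. by move=> pw; rewrite proj_T ?(t_ginv grp) // proj_T // (s_ginv grp). Qed.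

Lemma proj_Q g w : pE w = s g -> pE (Q g w) = s g.
Proof. by move=> pw; rewrite /Q proj_act proj_TT // proj_csig. Qed.

Lemma QB g w w' : pE w = s g -> pE w' = s g -> Q g (subE w w') = subE (Q g w) (Q g w').
Proof.
move=> pw pw'; rewrite /Q T_sub // T_sub ?proj_T ?(s_ginv grp) // act_sub //.
  by rewrite proj_csig proj_TT.
by rewrite !proj_TT.
Qed.

Lemma Q_near_id g w : pE w = s g -> nE (subE w (Q g w)) <= rdef (t g) * nE w.
Proof.
move=> pw; set w1 := T (u (s g)) w.
have h1 := unit_defect_le (gorbit_s grp g) pw.
have o2 : Defs.orbit s t (t g) (t (i g)) by rewrite (t_ginv grp); exact: gorbit_s grp g.
have h2 := mul_defect_le o2 (esym (s_ginv grp g)) pw.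
rewrite (gmulVg grp) -/w1 in h2.
have pw1 : pE w1 = s g by rewrite proj_T ?(s_unit grp) // (t_unit grp).
have pa : pE (act (sigma (i g) g) w1) = s g by rewrite proj_act ?pw1 ?proj_sigmaVg.
have eQ : subE w1 (Q g w) = act (csig g) (subE (act (sigma (i g) g) w1) (T (i g) (T g w))).
  rewrite act_sub ?proj_csig ?pa ?proj_TT // -act_mul ?proj_csig ?proj_sigmaVg ?pw1 //.
  by rewrite csig_mul -pw1 act1.
have h3 : nE (subE w1 (Q g w)) <= rmul (t g) * nE w.
  rewrite eQ; apply: le_trans (act_norm _) _.
    by rewrite (proj_sub bbE) ?pa ?proj_TT ?proj_csig.
  apply: le_trans h2; apply: ler_wpM2r; [exact: nE_ge0 | exact: norm_csig_le].
have := ler_bdistD bbE (a := w) (b := w1) (c := Q g w).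
rewrite pw1 proj_Q // pw => /(_ erefl erefl) h4.
by rewrite /rdef mulrDl; apply: le_trans h4 _; exact: lerD.
Qed.

Lemma Q_lower g w : pE w = s g -> (1 - rdef (t g)) * nE w <= nE (Q g w).
Proof.
move=> pw; have pQw : pE (Q g w) = pE w by rewrite proj_Q.
have hp : pE (Q g w) = pE (subE w (Q g w)) by rewrite (proj_sub bbE) ?pQw.
have := ler_bnormD bbE hp; rewrite (bsubrKC bbE (esym pQw)); have := Q_near_id pw; lra.
Qed.

Lemma Q_norm_le g w : pE w = s g -> nE (Q g w) <= nA (csig g) * nE (T (i g) (T g w)).
Proof. by move=> pw; apply: act_norm; rewrite proj_csig proj_TT. Qed.

Lemma T_inj g w w' : pE w = s g -> pE w' = s g -> T g w = T g w' -> w = w'.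
Proof.
move=> pw pw' eT.
have pd : pE (subE w w') = s g by rewrite (proj_sub bbE) // pw pw'.
have h1 := Q_lower pd; have h2 := Q_norm_le pd.
rewrite T_sub // eT (bsubrr bbE) proj_T // -(s_ginv grp) T_zero (bnorm0 bbE) mulr0 in h2.
have [r0 r4] := rdef_bounds (t g).
apply: (bdist_eq0 bbE); first by rewrite pw pw'.
by have := nE_ge0 (subE w w'); nra.
Qed.

Lemma Q_surj k z0 : pE z0 = s k -> exists w, pE w = s k /\ Q k w = z0.
Proof.
move=> pz; pose Phi w := addE z0 (subE w (Q k w)).
(* [Phi] is an r(T, t k)-contraction whose fixed points solve [Q k w = z0]. *)
have pPhi w : pE w = s k -> pE (Phi w) = s k.
  by move=> pw; rewrite /Phi (proj_add bbE) ?(proj_sub bbE) ?proj_Q ?pw.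
have [r0 r4] := rdef_bounds (t k).
have contr w w' : pE w = s k -> pE w' = s k ->
    nE (subE (Phi w) (Phi w')) <= rdef (t k) * nE (subE w w').
  move=> pw pw'; have pd : pE (subE w w') = s k by rewrite (proj_sub bbE) ?pw ?pw'.
  rewrite /Phi (baddrKA bbE) ?(proj_sub bbE) ?proj_Q ?pw ?pw' ?pz //.
  by rewrite (bsubBB bbE) ?proj_Q ?pw ?pw' // -QB // Q_near_id.
have [|w [pw fw]] := bundle_fixed_point bbE pPhi contr.
  by apply/andP; split => //; lra.
exists w; split => //.
have pq : pE w = pE (Q k w) by rewrite proj_Q.
rewrite -(bsubKr bbE pq) -{1}fw /Phi (baddrK bbE) //.
by rewrite (proj_sub bbE) // pz pw.
Qed.

Lemma T_surj g z0 : pE z0 = t g -> exists y, pE y = s g /\ T g y = z0.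
Proof.
move=> pz; set k := i g.
have pzk : pE z0 = s k by rewrite (s_ginv grp).
have [w [pw <-]] := Q_surj pzk.
have pTk : pE (T k w) = s g by rewrite proj_T // (t_ginv grp).
have pg : pA (gact k (csig k)) = s g by rewrite proj_gact ?proj_csig // (t_ginv grp).
(* A-linearity moves [gact k (csig k)] across [T g] as [csig k]. *)
exists (act (gact k (csig k)) (T k w)); split; first by rewrite proj_act ?pTk ?pg.
rewrite Hl // -gact_mul ?proj_csig ?(t_ginv grp) // (gmulgV grp).
have -> : t g = pA (csig k) by rewrite proj_csig (s_ginv grp).
by rewrite gact_unit /Q /k (ginvK grp).
Qed.

Definition Tinv g e := xget (zE (s g)) [set w | pE w = s g /\ T g w = e].

Lemma Tinv_spec g e : pE e = t g -> pE (Tinv g e) = s g /\ T g (Tinv g e) = e.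
Proof. by move=> pe; exact: (xgetPex (zE (s g)) (T_surj pe)). Qed.

Lemma proj_Tinv g e : pE e = t g -> pE (Tinv g e) = s g.
Proof. by move=> /Tinv_spec[]. Qed.

Lemma TinvK g e : pE e = t g -> T g (Tinv g e) = e.
Proof. by move=> /Tinv_spec[]. Qed.

Lemma TK g e : pE e = s g -> Tinv g (T g e) = e.
Proof. by move=> pe; have [p1 p2] := Tinv_spec (proj_T pe); exact: T_inj p1 pe p2. Qed.

Lemma Tinv_add g e e' : pE e = t g -> pE e' = t g ->
  Tinv g (addE e e') = addE (Tinv g e) (Tinv g e').
Proof.
move=> pe pe'; have pa : pE (addE e e') = t g by rewrite (proj_add bbE) // pe pe'.
apply: (T_inj (g := g)); first exact: proj_Tinv.
  by rewrite (proj_add bbE) !proj_Tinv.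
by rewrite T_add ?proj_Tinv // !TinvK.
Qed.

Lemma Tinv_scal g k e : pE e = t g -> Tinv g (scalE k e) = scalE k (Tinv g e).
Proof.
move=> pe; have pk : pE (scalE k e) = t g by rewrite (proj_scal bbE).
apply: (T_inj (g := g)); first exact: proj_Tinv.
  by rewrite (proj_scal bbE) proj_Tinv.
by rewrite T_scal ?proj_Tinv // !TinvK.
Qed.

Lemma Tinv_norm_le g e : pE e = t g ->
  nE (Tinv g e) <= (1 - rdef (t g))^-1 * (ell (i g) * nE (T (i g) e)).
Proof.
move=> pe; have [p1 p2] := Tinv_spec pe; have [r0 r4] := rdef_bounds (t g).
have h : (1 - rdef (t g)) * nE (Tinv g e) <= ell (i g) * nE (T (i g) e).
  apply: le_trans (Q_lower p1) _; apply: le_trans (Q_norm_le p1) _; rewrite p2.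
  by apply: ler_wpM2r => //; exact: norm_csig_le.
have -> : nE (Tinv g e) = (1 - rdef (t g))^-1 * ((1 - rdef (t g)) * nE (Tinv g e)).
  by field; apply: lt0r_neq0; lra.
by apply: ler_wpM2l => //; rewrite invr_ge0; lra.
Qed.

Lemma Tinv_bounded g : exists C : R, forall e, pE e = t g -> nE (Tinv g e) <= C * nE e.
Proof.
have [C hC] := T_bounded (i g); have [r0 r4] := rdef_bounds (t g).
exists ((1 - rdef (t g))^-1 * (ell (i g) * C)) => e pe.
apply: le_trans (Tinv_norm_le pe) _; rewrite -!mulrA.
apply: ler_wpM2l; first by rewrite invr_ge0; lra.
apply: ler_wpM2l; first exact: le_trans (ell_ge1 _).
by apply: hC; rewrite (s_ginv grp).
Qed.

Lemma Tinv_opnorm_le g :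
  (opnorm pE nE (t g) (Tinv g) <= bound s t i pA nA mulA oneA pE nE sigma T (t g)
      * ((1 - fine (defect s t u m i pA nA mulA oneA pE addE scalE nE
                       act sigma T (t g)))^-1)%:E)%E.
Proof.
rewrite fine_defect; have [r0 r4] := rdef_bounds (t g).
apply: ge_ereal_sup => _ [e [pe ne] <-].
apply: le_trans (_ : _ <= ((ell (i g) * nE (T (i g) e)) * (1 - rdef (t g))^-1)%:E)%E _.
  by rewrite lee_fin mulrC; exact: Tinv_norm_le.
rewrite EFinM; apply: lee_wpmul2r; first by rewrite lee_fin invr_ge0; lra.
apply: le_trans (_ : _ <= (ell (i g))%:E * opnorm pE nE (s (i g)) (T (i g)))%E _.
  rewrite EFinM lee_wpmul2l ?lee_fin //; first exact: le_trans (ell_ge1 _).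
  have pe' : pE e = s (i g) by rewrite (s_ginv grp).
  exact: opnorm_ub pe' ne.
by apply: ereal_sup_ubound; exists (i g) => //; exists (i g); rewrite (s_ginv grp).
Qed.

Lemma sigma_csig g : mulA (sigma (i g) g) (csig g) = oneA (s g).
Proof. by case: (csig_inverse g) => _ -> _; rewrite proj_sigmaVg. Qed.

Lemma Tinv_dist_le g z y a : pE z = t g -> pE y = s g -> pA a = s g ->
  nA (subA (oneA (s g)) (mulA (sigma (i g) g) a)) <= 2^-1 ->
  nE (subE (Tinv g z) y) <= 4 * nA a * nE (T (i g) (subE z (T g y))).
Proof.
move=> pz py pa hsig.
have [pTi TTi] := Tinv_spec pz.
have pw : pE (subE (Tinv g z) y) = s g by rewrite (proj_sub bbE) // pTi py.
have hc : (1 - 2^-1) * nA (csig g) <= nA a.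
  have h := inverse_norm_le HA (csig_inverse g) (etrans pa (esym (proj_sigmaVg g))).
  rewrite proj_sigmaVg in h; apply: le_trans h; apply: ler_wpM2r; [exact: nA_ge0 | lra].
have := Q_lower pw; have := Q_norm_le pw; rewrite T_sub // TTi.
have [r0 r4] := rdef_bounds (t g).
set w := nE (subE (Tinv g z) y); set N := nE (T (i g) (subE z (T g y))).
have e1 : 3 / 4 * w <= (1 - rdef (t g)) * w by apply: ler_wpM2r; [exact: nE_ge0 | lra].
have e2 : nA (csig g) * N <= 2 * nA a * N by apply: ler_wpM2r; [exact: nE_ge0 | lra].
have e3 : 0 <= nA a * N by apply: mulr_ge0; [exact: nA_ge0 | exact: nE_ge0].
lra.
Qed.

Section TinvContinuity.
Variables (W : Type) (K : set_system W) (g0 : G) (z0 : E)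
  (gq : W -> G) (zq yq : W -> E) (aq : W -> A).
Hypothesis KP : ProperFilter K.
Hypothesis pz0 : pE z0 = t g0.
Hypotheses (gq_cvg : gq q @[q --> K] --> g0) (zq_cvg : zq q @[q --> K] --> z0).
Hypotheses (aq_cvg : aq q @[q --> K] --> csig g0) (yq_cvg : yq q @[q --> K] --> Tinv g0 z0).
Hypothesis pzq : \forall q \near K, pE (zq q) = t (gq q).
Hypothesis paq : \forall q \near K, pA (aq q) = s (gq q).
Hypothesis pyq : \forall q \near K, pE (yq q) = s (gq q).

Let KF : Filter K := @filter_filter _ K KP.

Let sq_cvg : s (gq q) @[q --> K] --> s g0.
Proof. exact: (cvg_continuous_comp (s_continuous grp (g := g0)) gq_cvg). Qed.

Lemma cvg_T (hq : W -> G) (eq : W -> E) h0 e0 :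
  hq q @[q --> K] --> h0 -> eq q @[q --> K] --> e0 -> pE e0 = s h0 ->
  (\forall q \near K, pE (eq q) = s (hq q)) -> T (hq q) (eq q) @[q --> K] --> T h0 e0.
Proof.
move=> hc ec pe0 pe.
apply: (cvg_comp_snd KF (f := fun q => (hq q, T (hq q) (eq q))) (y := (h0, T h0 e0))).
apply: (cvg_within_continuous (k := fun q => (hq q, eq q)) (y := (h0, e0)) T_continuous).
- exact: esym pe0.
- exact: cvg_pair.
- by apply: filterS pe => q /= ->.
Qed.

Lemma cvg_sigma_defect :
  nA (subA (oneA (s (gq q))) (mulA (sigma (i (gq q)) (gq q)) (aq q))) @[q --> K] --> 0.
Proof.
have csig_cvg : sigma (i (gq q)) (gq q) @[q --> K] --> sigma (i g0) g0.
  apply: (cvg_within_continuous (k := fun q => (i (gq q), gq q)) (y := (i g0, g0))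
    sigma_continuous); first exact: (s_ginv grp).
    exact: cvg_pair (cvg_continuous_comp (ginv_continuous grp (g := g0)) gq_cvg) gq_cvg.
  by apply: nearW => q; exact: (s_ginv grp).
have prod_cvg : mulA (sigma (i (gq q)) (gq q)) (aq q) @[q --> K] --> oneA (s g0).
  have [_ [_ _ _ mulc] _ _ _] := HA; rewrite -sigma_csig.
  apply: (cvg_within_continuous (k := fun q => (sigma (i (gq q)) (gq q), aq q))
    (y := (sigma (i g0) g0, csig g0)) mulc).
  - by rewrite /fibered /= proj_sigmaVg proj_csig.
  - exact: cvg_pair.
  - by apply: filterS paq => q /= h; rewrite /fibered /= proj_sigmaVg h.
have one_cvg : oneA (s (gq q)) @[q --> K] --> oneA (s g0).
  exact: (cvg_continuous_comp (one_continuous HA (x := _)) sq_cvg).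
have := bcvg_norm bbA (bcvgB bbA KP one_cvg prod_cvg erefl _).
rewrite (bsubrr bbA) (bnorm0 bbA); apply.
by apply: filterS paq => q h; rewrite (proj_one HA) (proj_mul HA) ?proj_sigmaVg ?h.
Qed.

Lemma cvg_T_residual : nE (T (i (gq q)) (subE (zq q) (T (gq q) (yq q)))) @[q --> K] --> 0.
Proof.
have Ty_cvg : T (gq q) (yq q) @[q --> K] --> z0.
  by rewrite -(TinvK pz0); apply: cvg_T => //; exact: proj_Tinv.
have pTy : \forall q \near K, pE (zq q) = pE (T (gq q) (yq q)).
  by apply: filterS2 pzq pyq => q -> h; rewrite proj_T.
have := bcvgB bbE KP zq_cvg Ty_cvg erefl pTy; rewrite (bsubrr bbE) pz0 => res_cvg.
have := cvg_T (cvg_continuous_comp (ginv_continuous grp (g := g0)) gq_cvg) res_cvg.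
rewrite -(s_ginv grp) T_zero => /(_ (proj_zero bbE _)) /(_ _) /(bcvg_norm bbE).
rewrite (bnorm0 bbE); apply.
by apply: filterS2 pzq pTy => q h1 h2; rewrite (proj_sub bbE) // (s_ginv grp) h1.
Qed.

Lemma cvg_Tinv_along : Tinv (gq q) (zq q) @[q --> K] --> Tinv g0 z0.
Proof.
set f0 := Tinv g0 z0; have pf0 : pE f0 = s g0 by exact: proj_Tinv.
have small_defect : \forall q \near K,
    nA (subA (oneA (s (gq q))) (mulA (sigma (i (gq q)) (gq q)) (aq q))) < 2^-1.
  apply: filterS ((cvgrPdist_lt _ _).1 cvg_sigma_defect _ (_ : 0 < 2^-1)) => [q|].
    by rewrite sub0r normrN ger0_norm.
  by rewrite invr_gt0.
have bounded_a : \forall q \near K, nA (aq q) < nA (csig g0) + 1.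
  apply: filterS ((cvgrPdist_lt _ _).1 (bcvg_norm bbA aq_cvg) _ ltr01) => q.
  by move/ltr_normlP => [h1 h2]; lra.
pose M := 4 * (nA (csig g0) + 1).
have dist_bound : \forall q \near K, 0 <= nE (subE (Tinv (gq q) (zq q)) (yq q))
    <= M * nE (T (i (gq q)) (subE (zq q) (T (gq q) (yq q)))).
  near=> q.
  have hz : pE (zq q) = t (gq q) by near: q.
  have hy : pE (yq q) = s (gq q) by near: q.
  have hpa : pA (aq q) = s (gq q) by near: q.
  have hd : nA (subA (oneA (s (gq q))) (mulA (sigma (i (gq q)) (gq q)) (aq q))) < 2^-1.
    by near: q.
  have hb : nA (aq q) < nA (csig g0) + 1 by near: q.
  rewrite nE_ge0 /=; apply: le_trans (Tinv_dist_le hz hy hpa (ltW hd)) _.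
  by apply: ler_wpM2r; [exact: nE_ge0 | rewrite /M ler_pM2l // ltW].
have dist_cvg : nE (subE (Tinv (gq q) (zq q)) (yq q)) @[q --> K] --> 0.
  apply: (squeeze_cvgr dist_bound); first exact: cvg_cst.
  by rewrite -(mulr0 M); apply: cvgMl_tmp; exact: cvg_T_residual.
have pdiff : \forall q \near K, pE (yq q) = pE (subE (Tinv (gq q) (zq q)) (yq q)).
  by apply: filterS2 pzq pyq => q h1 h2; rewrite (proj_sub bbE) proj_Tinv.
have diff_cvg : subE (Tinv (gq q) (zq q)) (yq q) @[q --> K] --> zE (s g0).
  apply: (bcvg_fell bbE KP) dist_cvg; apply: cvg_trans _ sq_cvg; apply: near_eq_cvg.
  by apply: filterS2 pdiff pyq => q <- ->.
have := bcvgD bbE KP yq_cvg diff_cvg; rewrite (proj_zero bbE) -pf0 (baddr0 bbE).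
move=> /(_ erefl pdiff); apply: cvg_trans; apply: near_eq_cvg.
by apply: filterS2 pzq pyq => q h1 h2; rewrite (bsubrKC bbE) // proj_Tinv.
Unshelve. all: by end_near.
Qed.

End TinvContinuity.

Lemma Tinv_continuous :
  {within [set ge | t ge.1 = pE ge.2], continuous (fun ge => (ge.1, Tinv ge.1 ge.2))}.
Proof.
apply/subspace_continuousP => -[g0 z0] /= tz0; have pz0 := esym tz0.
set D := [set ge : G * E | t ge.1 = pE ge.2].
have FF : Filter (within D (nbhs (g0, z0))) by apply: within_filter.
apply: cvg_pair; first by apply: cvg_within_filter; exact: cvg_fst.
apply: (cvg_from_refinements (pi := fun q : G * E * A * E => q.1.1)) => K KP FK.
have KF : Filter K := @filter_filter _ K KP.
have KD : K D by apply: FK; apply: nearW.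
have Kc : ge @[ge --> K] --> (g0, z0).
  by move=> V hV; apply: FK; apply: filterS hV => ? ? _.
have Kg : ge.1 @[ge --> K] --> g0 := cvg_comp_fst KF Kc.
have Ks := cvg_continuous_comp (s_continuous grp (g := g0)) Kg.
have [K1 [K1P K1K K1a K1p]] := open_map_lift_filter (proj_open_map bbA) KP Ks (proj_csig g0).
have K1s : s q.1.1 @[q --> K1] --> s g0 by move=> V /Ks /K1K.
have [K2 [K2P K2K K2y K2p]] :=
  open_map_lift_filter (proj_open_map bbE) K1P K1s (proj_Tinv pz0).
exists K2; split => //; first by move=> S /K1K /K2K.
apply: (cvg_Tinv_along (gq := fun q => q.1.1.1) (zq := fun q => q.1.1.2)
  (aq := fun q => q.1.2) (yq := snd) K2P pz0) => //.
- by move=> V /Kg /K1K /K2K.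
- by move=> V /(cvg_comp_snd KF Kc) /K1K /K2K.
- by move=> V /K1a /K2K.
- by apply: filterS (K2K _ (K1K _ KD)) => q /= ->.
- exact: K2K _ K1p.
Qed.

Lemma Tinv_morphism : pullback_morphism t s pE addE scalE nE Tinv.
Proof.
split; [exact: proj_Tinv | exact: Tinv_add | exact: Tinv_scal | exact: Tinv_bounded |].
exact: Tinv_continuous.
Qed.

End AlmostRepresentation.

Theorem mainTheorem3 (R : realType) (G : ptopologicalType) (X A E : topologicalType)
  (s t : G -> X) (u : X -> G) (m : G -> G -> G) (i : G -> G)
  (pA : A -> X) (zA : X -> A) (addA : A -> A -> A) (scalA : R -> A -> A) (nA : A -> R)
  (mulA : A -> A -> A) (oneA : X -> A) (gact : G -> A -> A)
  (pE : E -> X) (zE : X -> E) (addE : E -> E -> E) (scalE : R -> E -> E) (nE : E -> R)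
  (act : A -> E -> E)
  (sigma : G -> G -> A) (T : G -> E -> E) :
  locally_compact_groupoid R s t u m i ->
  banach_algebra_bundle pA zA addA scalA nA mulA oneA ->
  algebra_G_action s t u m pA addA scalA nA mulA oneA gact ->
  banach_module_bundle pA addA scalA nA mulA oneA pE zE addE scalE nE act ->
  multiplier s t u m pA mulA oneA gact sigma ->
  pseudorepresentation s t pE addE scalE nE T ->
  A_linear s pA pE act gact T ->
  almost_sigma_rep s t u m i pA nA mulA oneA pE addE scalE nE act sigma T ->
  exists Tinv : G -> E -> E,
    [/\ (forall g e, pE e = s g -> Tinv g (T g e) = e),
        (forall g e, pE e = t g -> T g (Tinv g e) = e),
        pullback_morphism t s pE addE scalE nE Tinv &
        (forall g : G,
           (opnorm pE nE (t g) (Tinv g)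
            <= bound s t i pA nA mulA oneA pE nE sigma T (t g)
               * ((1 - fine (defect s t u m i pA nA mulA oneA pE addE scalE nE
                                act sigma T (t g)))^-1)%:E)%E)].
Proof.
move=> Hlc HA Hg HE Hs HT Hl Hr; exists (Tinv s pE zE T); split.
- exact: TK Hlc Hg HE Hs HT Hl Hr.
- exact: TinvK Hlc Hg HE Hs HT Hl Hr.
- exact: Tinv_morphism Hlc HA Hg HE Hs HT Hl Hr.
- exact: Tinv_opnorm_le Hlc Hg HE Hs HT Hl Hr.
Qed.
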